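(* Let $\lambda=2\cos(\pi/5)$ and let $H_5$ be the subgroup of $SL(2,\mathbb R)$ generated by $S=\begin{pmatrix}0&1\\-1&0\end{pmatrix}$ and $T=\begin{pmatrix}1&\lambda\\0&1\end{pmatrix}$. Let $H_5^5$ be the subgroup of $H_5$ generated by all fifth powers $x^5$, $x\in H_5$, and let $H_5'=[H_5,H_5]$ be the commutator subgroup. Then neither $H_5^5$ nor $H_5'$ is a congruence subgroup.
   Context: For an ideal $A$ of $\mathbb Z[\lambda]$, $H(A)=\{(a_{ij})\in H_5 : a_{11}-1,\ a_{22}-1,\ a_{12},\ a_{21}\in A\}$. A subgroup of $H_5$ is called congruence if it contains $H(A)$ for some nonzero ideal $A$ of $\mathbb Z[\lambda]$. *)

From HB Require Import structures.
From mathcomp Require Import all_boot all_order all_algebra.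
From mathcomp Require Import all_classical all_reals all_analysis.
Set Implicit Arguments. Unset Strict Implicit. Unset Printing Implicit Defensive.
Import Order.TTheory GRing.Theory Num.Theory.
Local Open Scope ring_scope.

Section H5.
Variable R : realType.

Definition lam : R := 2 * cos (pi / 5).

Definition mx2 (a b c d : R) : 'M[R]_2 :=
  \matrix_(i < 2, j < 2)
    if (i == 0 :> nat) then (if (j == 0 :> nat) then a else b)
    else (if (j == 0 :> nat) then c else d).

Definition i0 : 'I_2 := @Ordinal 2 0 isT.
Definition i1 : 'I_2 := @Ordinal 2 1 isT.

Definition Smx : 'M[R]_2 := mx2 0 1 (-1) 0.
Definition Tmx : 'M[R]_2 := mx2 1 lam 0 1.

Inductive gen (X : 'M[R]_2 -> Prop) : 'M[R]_2 -> Prop :=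
  | gen_one : gen X 1%:M
  | gen_elt x : X x -> gen X x
  | gen_mul x y : gen X x -> gen X y -> gen X (x *m y)
  | gen_inv x : gen X x -> gen X (invmx x).

Definition H5 : 'M[R]_2 -> Prop := gen (fun x => x = Smx \/ x = Tmx).

Definition H5_fifth : 'M[R]_2 -> Prop :=
  gen (fun m => exists x, H5 x /\ m = x *m x *m x *m x *m x).

Definition H5_comm : 'M[R]_2 -> Prop :=
  gen (fun m => exists x y, H5 x /\ H5 y /\
                  m = invmx x *m invmx y *m x *m y).

Definition Zlam (x : R) : Prop :=
  exists a b : int, x = a%:~R + b%:~R * lam.

Definition is_ideal (A : R -> Prop) : Prop :=
  [/\ forall x, A x -> Zlam x,
      A 0,
      forall x y, A x -> A y -> A (x - y)
    & forall r x, Zlam r -> A x -> A (r * x)].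

Definition nonzero_ideal (A : R -> Prop) : Prop :=
  is_ideal A /\ exists x, A x /\ x != 0.

Definition HA (A : R -> Prop) (m : 'M[R]_2) : Prop :=
  [/\ H5 m, A (m i0 i0 - 1), A (m i1 i1 - 1), A (m i0 i1) & A (m i1 i0)].

Definition congruence (G : 'M[R]_2 -> Prop) : Prop :=
  exists A, nonzero_ideal A /\ forall m, HA A m -> G m.

End H5.

From Pilot Require Import Defs.
From HB Require Import structures.
From mathcomp Require Import all_boot all_order all_algebra.
From mathcomp Require Import all_classical all_reals all_analysis.
From mathcomp Require Import ring lra zify.
Set Implicit Arguments. Unset Strict Implicit. Unset Printing Implicit Defensive.
Import Order.TTheory GRing.Theory Num.Theory.
Local Open Scope ring_scope.

(* H_5 is generated by S and U = S T, with S^2 = -1 and U^5 = 1. A ping-pong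
   argument on the quadrants of R^2 shows that a word in S and U representing +-1
   reduces to the empty word by cancelling factors S^2 and U^5, so the number of
   U's modulo 5 is a homomorphism H_5 -> Z/5; it kills fifth powers and
   commutators. Conversely, every nonzero ideal A of Z[lam] contains a positive
   integer N = 5^j M with 5 not dividing M, and a Hensel-type lifting modulo powers
   of 5 yields words congruent to 1 modulo N whose number of U's is congruent to M
   modulo 5: they lie in H(A) but outside the kernel. *)

Lemma int_norm_even (a b : int) : a * a + a * b - b * b = 0 ->
  exists x y : int, a = x * 2 /\ b = y * 2.
Proof.
have := divz_eq a 2; have := divz_eq b 2.
have : 0 <= (a %% 2)%Z < 2 by rewrite modz_ge0 // ltz_pmod.
have : 0 <= (b %% 2)%Z < 2 by rewrite modz_ge0 // ltz_pmod.
set x := (a %/ 2)%Z; set y := (b %/ 2)%Z; set r := (a %% 2)%Z; set s := (b %% 2)%Z.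
move=> s_bit r_bit eb ea e; exists x, y; rewrite {1}ea {1}eb.
suff [-> ->] : r = 0 /\ s = 0 by rewrite !addr0.
clearbody x y r s; subst a b.
set K := 2 * x * x + 2 * x * r + 2 * x * y + x * s + r * y - 2 * y * y - 2 * y * s.
have eK : 2 * K + (r * r + r * s - s * s) = 0 by rewrite -e /K; ring.
have [r01 s01] : (r = 0 \/ r = 1) /\ (s = 0 \/ s = 1) by lia.
by clearbody K; case: r01 => ?; case: s01 => ?; subst r s; lia.
Qed.

(* 4 (a^2 + ab - b^2) = (2a + b)^2 - 5 b^2: this says that 5 is not a rational
   square, proved by a parity descent. *)
Lemma int_norm_eq0 (a b : int) : a * a + a * b - b * b = 0 -> a = 0 /\ b = 0.
Proof.
move: {2}(`|a| + `|b|)%N (leqnn (`|a| + `|b|)%N) => n.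
elim: n a b => [|n IH] a b hn e.
  by move: hn; rewrite leqn0 addn_eq0 !absz_eq0 => /andP [/eqP -> /eqP ->].
have [x [y [ea eb]]] := int_norm_even e.
suff [x0 y0] : x = 0 /\ y = 0 by rewrite ea eb x0 y0 !mul0r.
apply: IH; last by move: e; rewrite ea eb => h; lia.
by have [x0|x0] := eqVneq x 0; move: hn; rewrite ea eb; lia.
Qed.

Lemma last_nseqS (T : Type) (x y : T) k : last x (nseq k.+1 y) = y.
Proof. by elim: k x. Qed.

Lemma ord2P (i : 'I_2) : i = i0 \/ i = i1.
Proof. by case: i => [[|[|]]] //= h; [left|right]; apply: val_inj. Qed.

Lemma mulmx2E (K : pzSemiRingType) (A B : 'M[K]_2) i j :
  (A *m B) i j = A i i0 * B i0 j + A i i1 * B i1 j.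
Proof.
rewrite mxE big_ord_recl big_ord1.
by congr (A i _ * B _ j + A i _ * B _ j); apply: val_inj.
Qed.

Lemma mx2_ext (T : Type) (A B : 'M[T]_2) : A i0 i0 = B i0 i0 -> A i0 i1 = B i0 i1 ->
  A i1 i0 = B i1 i0 -> A i1 i1 = B i1 i1 -> A = B.
Proof.
move=> h00 h01 h10 h11; apply/matrixP => i j.
by case: (ord2P i) => ->; case: (ord2P j) => ->.
Qed.

Section Hecke5.
Variable R : realType.
Local Notation lam := (@lam R).
Local Notation mx2 := (@mx2 R).
Local Notation Smx := (@Smx R).
Local Notation Tmx := (@Tmx R).
Local Notation Zlam := (@Zlam R).
Local Notation H5 := (@H5 R).
Local Notation H5_fifth := (@H5_fifth R).
Local Notation H5_comm := (@H5_comm R).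
Local Notation HA := (@HA R).
Local Notation is_ideal := (@is_ideal R).
Local Notation nonzero_ideal := (@nonzero_ideal R).
Local Notation congruence := (@congruence R).

Lemma lam_sqr : lam ^+ 2 = lam + 1.
Proof.
set t : R := pi / 5; set c := cos t; set s := sin t.
have c_gt0 : 0 < c.
  by apply: cos_gt0_pihalf; have := pi_gt0 R; rewrite /t => hp; apply/andP; split; lra.
have cos2 : cos (t + t) = 2 * c ^+ 2 - 1.
  by have := sin2cos2 t; rewrite cosD -/c -/s => e; ring: e.
have cos3 : cos (t + t + t) = 4 * c ^+ 3 - 3 * c.
  have sin2 : sin (t + t) = 2 * s * c by rewrite sinD -/c -/s; ring.
  by rewrite cosD cos2 sin2 -/c -/s; have := sin2cos2 t; rewrite -/s -/c => e; ring: e.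
have cos3_cos2 : cos (t + t + t) = - cos (t + t).
  have -> : t + t + t = pi - (t + t) by rewrite /t; field.
  by rewrite cosB cospi sinpi; ring.
have : (c + 1) * (4 * c ^+ 2 - 2 * c - 1) = 0.
  by rewrite cos3 cos2 in cos3_cos2; nra.
move/eqP; rewrite mulf_eq0 => /orP [/eqP h|/eqP h]; first lra.
by rewrite /lam /Defs.lam -/t -/c; nra.
Qed.

Lemma lam_gt1 : 1 < lam.
Proof.
have lam_gt0 : 0 < lam.
  rewrite /lam /Defs.lam; apply: mulr_gt0 => //; apply: cos_gt0_pihalf.
  by have := pi_gt0 R => hp; apply/andP; split; lra.
by have := lam_sqr; nra.
Qed.

Section Entries.
Variables a b c d : R.
Lemma mx2_00 : mx2 a b c d i0 i0 = a. Proof. by rewrite mxE. Qed.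
Lemma mx2_01 : mx2 a b c d i0 i1 = b. Proof. by rewrite mxE. Qed.
Lemma mx2_10 : mx2 a b c d i1 i0 = c. Proof. by rewrite mxE. Qed.
Lemma mx2_11 : mx2 a b c d i1 i1 = d. Proof. by rewrite mxE. Qed.
End Entries.
Definition mx2E := (mx2_00, mx2_01, mx2_10, mx2_11).

Lemma mx2_eta (A : 'M[R]_2) : A = mx2 (A i0 i0) (A i0 i1) (A i1 i0) (A i1 i1).
Proof. by apply: mx2_ext; rewrite mx2E. Qed.

Lemma mulmx2 a b c d a' b' c' d' :
  mx2 a b c d *m mx2 a' b' c' d' =
  mx2 (a * a' + b * c') (a * b' + b * d') (c * a' + d * c') (c * b' + d * d').
Proof. by apply: mx2_ext; rewrite !mulmx2E !mx2E. Qed.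

Lemma scalar_mx2 m : m%:M = mx2 m 0 0 m.
Proof. by apply: mx2_ext; rewrite !mxE. Qed.

Lemma mx2N1 : - 1%:M = mx2 (-1) 0 0 (-1).
Proof. by apply: mx2_ext; rewrite !mxE /=; ring. Qed.

Lemma Zlam_int (k : int) : Zlam k%:~R.
Proof. by exists k, 0; rewrite mul0r addr0. Qed.

Lemma Zlam_lam : Zlam lam.
Proof. by exists 0, 1; rewrite mul1r add0r. Qed.

Lemma Zlam_add x y : Zlam x -> Zlam y -> Zlam (x + y).
Proof.
by move=> [a [b ->]] [c [d ->]]; exists (a + c), (b + d); rewrite !intrD; ring.
Qed.

Lemma Zlam_opp x : Zlam x -> Zlam (- x).
Proof. by move=> [a [b ->]]; exists (- a), (- b); rewrite !intrN; ring. Qed.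

Lemma Zlam_mul x y : Zlam x -> Zlam y -> Zlam (x * y).
Proof.
move=> [a [b ->]] [c [d ->]]; exists (a * c + b * d), (a * d + b * c + b * d).
by rewrite !intrD !intrM; have e := lam_sqr; ring: e.
Qed.

Ltac Zlam_closure := repeat first
  [ assumption | apply: Zlam_lam | apply: Zlam_int | apply: (Zlam_int 0)
  | apply: (Zlam_int 1) | apply: Zlam_add | apply: Zlam_opp | apply: Zlam_mul ].

(** * Words in S and U *)

(* Elements of Z[lam] and 2x2 matrices over Z[lam] as integer coordinates in the
   basis (1, lam), so that the matrix of an explicit word can be computed. *)
Definition zlam := (int * int)%type.
Definition zlam_val (x : zlam) : R := x.1%:~R + x.2%:~R * lam.
Definition zlam_add (x y : zlam) : zlam := (x.1 + y.1, x.2 + y.2).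
Definition zlam_mul (x y : zlam) : zlam :=
  (x.1 * y.1 + x.2 * y.2, x.1 * y.2 + x.2 * y.1 + x.2 * y.2).

Lemma zlam_valD x y : zlam_val (zlam_add x y) = zlam_val x + zlam_val y.
Proof. by rewrite /zlam_val /= !intrD; ring. Qed.

Lemma zlam_valM x y : zlam_val (zlam_mul x y) = zlam_val x * zlam_val y.
Proof. by rewrite /zlam_val /= !intrD !intrM; have e := lam_sqr; ring: e. Qed.

Lemma Zlam_val x : Zlam (zlam_val x).
Proof. by exists x.1, x.2. Qed.

Definition zmx := ((zlam * zlam) * (zlam * zlam))%type.
Definition zmx_val (m : zmx) : 'M[R]_2 :=
  mx2 (zlam_val m.1.1) (zlam_val m.1.2) (zlam_val m.2.1) (zlam_val m.2.2).
Definition zmx_mul (m n : zmx) : zmx :=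
  ((zlam_add (zlam_mul m.1.1 n.1.1) (zlam_mul m.1.2 n.2.1),
    zlam_add (zlam_mul m.1.1 n.1.2) (zlam_mul m.1.2 n.2.2)),
   (zlam_add (zlam_mul m.2.1 n.1.1) (zlam_mul m.2.2 n.2.1),
    zlam_add (zlam_mul m.2.1 n.1.2) (zlam_mul m.2.2 n.2.2))).

Lemma zmx_valM m n : zmx_val (zmx_mul m n) = zmx_val m *m zmx_val n.
Proof. by rewrite /zmx_val mulmx2 /= !zlam_valD !zlam_valM. Qed.

(* Words in the generators S and U = S T of H_5, the letter [false] standing
   for S and [true] for U; [count id w] is the number of U's in w. *)
Definition Umx : 'M[R]_2 := Smx *m Tmx.
Definition letter_mx (b : bool) : 'M[R]_2 := if b then Umx else Smx.
Definition word_mx (w : seq bool) : 'M[R]_2 :=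
  foldr (fun b m => letter_mx b *m m) 1%:M w.

Lemma word_mx_nil : word_mx [::] = 1%:M.
Proof. by []. Qed.

Lemma word_mx_cons b w : word_mx (b :: w) = letter_mx b *m word_mx w.
Proof. by []. Qed.

Lemma word_mx_cat w1 w2 : word_mx (w1 ++ w2) = word_mx w1 *m word_mx w2.
Proof. by elim: w1 => [|b w IH] /=; rewrite ?mul1mx // IH mulmxA. Qed.

Definition letter_zmx (b : bool) : zmx :=
  if b then (((0, 0), (1, 0)), ((-1, 0), (0, -1)))
  else (((0, 0), (1, 0)), ((-1, 0), (0, 0))).
Definition word_zmx (w : seq bool) : zmx :=
  foldr (fun b m => zmx_mul (letter_zmx b) m) (((1, 0), (0, 0)), ((0, 0), (1, 0))) w.

Lemma word_mxE w : word_mx w = zmx_val (word_zmx w).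
Proof.
elim: w => [|b w IH].
  by rewrite /= scalar_mx2 /zmx_val /zlam_val /=; congr mx2; ring.
rewrite word_mx_cons /= zmx_valM -IH; congr (_ *m _).
by case: b; rewrite /letter_mx /Umx ?mulmx2 /Smx /Tmx /zmx_val /zlam_val /=;
  congr mx2; ring.
Qed.

Lemma word_mx_compute m w : word_zmx w = m -> word_mx w = zmx_val m.
Proof. by rewrite word_mxE => ->. Qed.

Lemma Zlam_word_mx w i j : Zlam (word_mx w i j).
Proof.
rewrite word_mxE /zmx_val.
by case: (ord2P i) => ->; case: (ord2P j) => ->; rewrite mx2E; apply: Zlam_val.
Qed.

Lemma word_mx_SS : word_mx [:: false; false] = - 1%:M.
Proof.
rewrite (word_mx_compute (m := (((-1, 0), (0, 0)), ((0, 0), (-1, 0))))); last by vm_compute.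
by rewrite mx2N1 /zmx_val /zlam_val /=; congr mx2; ring.
Qed.

Lemma word_mx_U5 : word_mx (nseq 5 true) = 1%:M.
Proof.
rewrite (word_mx_compute (m := (((1, 0), (0, 0)), ((0, 0), (1, 0))))); last by vm_compute.
by rewrite scalar_mx2 /zmx_val /zlam_val /=; congr mx2; ring.
Qed.

Definition T_word := [:: false; false; false; true].

Lemma word_mx_T : word_mx T_word = Tmx.
Proof.
rewrite (word_mx_compute (m := (((1, 0), (0, 1)), ((0, 0), (1, 0))))); last by vm_compute.
by rewrite /zmx_val /zlam_val /Tmx /=; congr mx2; ring.
Qed.

(* S^-1 = S^3 and U^-1 = U^4. *)
Definition inv_letter (b : bool) := if b then nseq 4 true else nseq 3 false.
Definition inv_word (w : seq bool) := flatten (map inv_letter (rev w)).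

Lemma inv_word_cons b w : inv_word (b :: w) = inv_word w ++ inv_letter b.
Proof. by rewrite /inv_word rev_cons -cats1 map_cat flatten_cat /= cats0. Qed.

Lemma count_inv_word w : count id (inv_word w) = (4 * count id w)%N.
Proof.
by elim: w => [|b w IH] //; rewrite inv_word_cons count_cat IH; case: b => /=; lia.
Qed.

Lemma word_mx_inv_word w : word_mx w *m word_mx (inv_word w) = 1%:M.
Proof.
elim: w => [|b w IH]; first by rewrite mul1mx.
rewrite inv_word_cons word_mx_cat word_mx_cons -mulmxA (mulmxA (word_mx w)) IH mul1mx.
rewrite -word_mx_cons (word_mx_compute (m := (((1, 0), (0, 0)), ((0, 0), (1, 0))))).
  by rewrite scalar_mx2 /zmx_val /zlam_val /=; congr mx2; ring.
by case: b; vm_compute.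
Qed.

Lemma invmx_word_mx w : invmx (word_mx w) = word_mx (inv_word w).
Proof.
have [w_unit _] := mulmx1_unit (word_mx_inv_word w).
by rewrite -[RHS](mulKmx w_unit) word_mx_inv_word mulmx1.
Qed.

Lemma H5_word_mx w : H5 (word_mx w).
Proof.
elim: w => [|b w IH]; first exact: gen_one.
apply: gen_mul => //; case: b => /=; last by apply: gen_elt; left.
by apply: gen_mul; apply: gen_elt; [left|right].
Qed.

Lemma H5_exists_word x : H5 x -> exists w, x = word_mx w.
Proof.
elim => [|y [->|->]|y z _ [w1 ->] _ [w2 ->]|y _ [w ->]].
- by exists [::].
- by exists [:: false]; rewrite /= mulmx1.
- by exists T_word; rewrite word_mx_T.
- by exists (w1 ++ w2); rewrite word_mx_cat.
- by exists (inv_word w); rewrite invmx_word_mx.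
Qed.

(** * Ping-pong on the quadrants *)

Definition mx_act (A : 'M[R]_2) (v : R * R) : R * R :=
  (A i0 i0 * v.1 + A i0 i1 * v.2, A i1 i0 * v.1 + A i1 i1 * v.2).

Lemma mx_actM A B v : mx_act (A *m B) v = mx_act A (mx_act B v).
Proof. by rewrite /mx_act /= !mulmx2E; congr pair; ring. Qed.

Lemma mx_act1 v : mx_act 1%:M v = v.
Proof. by case: v => p q; rewrite /mx_act scalar_mx2 !mx2E /=; congr pair; ring. Qed.

Definition pm1 (A : 'M[R]_2) := A = 1%:M \/ A = - 1%:M.

Definition quad13 (v : R * R) := 0 < v.1 * v.2.
Definition quad24 (v : R * R) := v.1 * v.2 < 0.
Definition quad13' (v : R * R) := quad13 v /\ v.1 != v.2.
Definition quad24' (v : R * R) := quad24 v /\ v.1 + v.2 != 0.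

Lemma mx_act_S v : mx_act Smx v = (v.2, - v.1).
Proof. by case: v => p q; rewrite /mx_act /Smx !mx2E /=; congr pair; ring. Qed.

Lemma S_quad24 v : quad24 v -> quad13 (mx_act Smx v).
Proof. by rewrite mx_act_S /quad13 /quad24 /=; nra. Qed.

Lemma S_quad24' v : quad24' v -> quad13' (mx_act Smx v).
Proof.
case=> /S_quad24 v13 v_anti; split => //; rewrite mx_act_S /=.
by apply: contra v_anti => /eqP ->; rewrite addrN.
Qed.

Lemma Upow_quad13 k v : (k < 4)%N -> quad13 v ->
  quad24' (mx_act (word_mx (nseq k.+1 true)) v).
Proof.
have l1 := lam_gt1; have l2 := lam_sqr.
case: v => p q k_lt4; rewrite /quad13 /quad24' /quad24 => pq_gt0; rewrite /= in pq_gt0.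
have p0 : p != 0 by apply: contraTneq pq_gt0 => ->; rewrite mul0r ltxx.
have q0 : q != 0 by apply: contraTneq pq_gt0 => ->; rewrite mulr0 ltxx.
case: k k_lt4 => [|[|[|[|k]]]] // _.
- rewrite (word_mx_compute (m := (((0,0),(1,0)),((-1,0),(0,-1))))); last by vm_compute.
  rewrite /mx_act /zmx_val /zlam_val !mx2E /=; split; first nra.
  by apply/eqP => e; nra.
- rewrite (word_mx_compute (m := (((-1,0),(0,-1)),((0,1),(0,1))))); last by vm_compute.
  rewrite /mx_act /zmx_val /zlam_val !mx2E /=; split; first nra.
  by apply/eqP => e; move/eqP: p0; apply; nra.
- rewrite (word_mx_compute (m := (((0,1),(0,1)),((0,-1),(-1,0))))); last by vm_compute.
  rewrite /mx_act /zmx_val /zlam_val !mx2E /=; split; first nra.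
  by apply/eqP => e; move/eqP: q0; apply; nra.
- rewrite (word_mx_compute (m := (((0,-1),(-1,0)),((1,0),(0,0))))); last by vm_compute.
  rewrite /mx_act /zmx_val /zlam_val !mx2E /=; split; first nra.
  by apply/eqP => e; nra.
Qed.

Definition reduced (w : seq bool) :=
  ~~ infix [:: false; false] w && ~~ infix (nseq 5 true) w.

Lemma reduced_catr l w : reduced (l ++ w) -> reduced w.
Proof.
case/andP => SS_l U5_l; apply/andP; split.
  by apply: contra SS_l => /(infix_catl l).
by apply: contra U5_l => /(infix_catl l).
Qed.

Lemma reduced_Upow k w : reduced (nseq k true ++ w) -> (k <= 4)%N.
Proof.
case/andP => _; apply: contraNleq => k_gt4.
by rewrite -(subnKC k_gt4) nseqD -catA (infix_infix [::]).
Qed.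

Lemma split_Upow w : exists k w', w = nseq k true ++ w' /\ ~~ head false w'.
Proof.
elim: w => [|[] w [k [w' [-> w'_S]]]]; first by exists 0%N, [::].
  by exists k.+1, w'.
by exists 0%N, (false :: nseq k true ++ w').
Qed.

Lemma reduced_S_word_act w v : reduced (false :: w) ->
  (if last false w then quad13 v else quad24 v) ->
  quad13 (mx_act (word_mx (false :: w)) v) /\
  (w != [::] -> quad13' (mx_act (word_mx (false :: w)) v)).
Proof.
have [n] := ubnP (size w); elim: n w => // n IH w /ltnSE size_w red_w v_ok.
have [k [w' [ew w'_S]]] := split_Upow w; subst w.
have k_le4 : (k <= 4)%N by apply: reduced_Upow (reduced_catr (l := [:: false]) red_w).
rewrite word_mx_cons word_mx_cat !mx_actM.
case: w' w'_S => [|[] // w3] _ in size_w red_w v_ok *.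
  rewrite word_mx_nil mx_act1 cats0; rewrite cats0 in v_ok.
  case: k => [|k] in k_le4 v_ok red_w size_w *.
    by rewrite word_mx_nil mx_act1; split=> //; apply: S_quad24.
  rewrite last_nseqS in v_ok.
  by have [] := S_quad24' (Upow_quad13 k_le4 v_ok).
case: k => [|k] in k_le4 red_w size_w v_ok *.
  case/andP: red_w => /negP[]; exact: (infix_infix [::] [:: false; false] w3).
have size_w3 : (size w3 < n)%N by move: size_w; rewrite size_cat size_nseq /=; lia.
rewrite last_cat /= in v_ok.
have [w3_13 _] := IH w3 size_w3 (reduced_catr (l := false :: nseq k.+1 true) red_w) v_ok.
by have [] := S_quad24' (Upow_quad13 k_le4 w3_13).
Qed.

Definition up_to_sign (x v : R * R) := x = v \/ x = (- v.1, - v.2).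

Lemma pm1_mx_act A v : pm1 A -> up_to_sign (mx_act A v) v.
Proof.
case=> ->; first by left; rewrite mx_act1.
by right; rewrite /mx_act mx2N1 !mx2E; congr pair; ring.
Qed.

Definition test_vec (b : bool) : R * R := if b then (1, 1) else (1, -1).

Lemma test_vec_quad b : if b then quad13 (test_vec b) else quad24 (test_vec b).
Proof. by case: b; rewrite /quad13 /quad24 /= ?mulr1 ?mulrN1 ?ltrN10 ?ltr01. Qed.

Lemma quad24'_test_vec b x : quad24' x -> ~ up_to_sign x (test_vec b).
Proof.
case=> x24 x_off; case: b => -[] x_eq; subst x; rewrite /quad24 /= in x24 x_off.
all: first [lra | by move/negP: x_off; apply; apply/eqP; lra].
Qed.

Lemma quad13_test_vec (b : bool) x :
  quad13 x -> (b -> quad13' x) -> ~ up_to_sign x (test_vec b).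
Proof.
case: b => [_ /(_ isT) [_ x_off]|x13 _] [] x_eq; subst x.
- by rewrite eqxx in x_off.
- by rewrite /= eqxx in x_off.
all: by move: x13; rewrite /quad13 /=; lra.
Qed.

Lemma reduced_pm1 w : reduced w -> pm1 (word_mx w) -> w = [::].
Proof.
move=> red_w w_pm1; have [k [w' [ew w'_S]]] := split_Upow w; subst w.
have k_le4 := reduced_Upow red_w.
have := pm1_mx_act (test_vec (last false (nseq k true ++ w'))) w_pm1.
rewrite word_mx_cat mx_actM.
case: w' w'_S => [|[] // w3] _ in red_w w_pm1 *.
  case: k => // k in k_le4 red_w w_pm1 *.
  rewrite cats0 last_nseqS word_mx_nil mx_act1.
  by move/(quad24'_test_vec (Upow_quad13 k_le4 (test_vec_quad true))).
have -> : last false (nseq k true ++ false :: w3) = last false w3 by rewrite last_cat.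
have [x13 x_off] :=
  reduced_S_word_act (reduced_catr red_w) (test_vec_quad (last false w3)).
case: k => [|k] in k_le4 red_w w_pm1 *; last first.
  by move/(quad24'_test_vec (Upow_quad13 k_le4 x13)).
have w3_nil : last false w3 -> w3 != [::] by case: w3 {x13 x_off red_w w_pm1}.
by rewrite word_mx_nil mx_act1 => /(quad13_test_vec x13 (fun U => x_off (w3_nil U))).
Qed.

Lemma pm1N A : pm1 (- A) -> pm1 A.
Proof. by case=> e; [right | left]; rewrite -[A]opprK e ?opprK. Qed.

Lemma pm1_count_U w : pm1 (word_mx w) -> (5 %| count id w)%N.
Proof.
have [n] := ubnP (size w); elim: n w => // n IH w /ltnSE size_w w_pm1.
have [red_w|] := boolP (reduced w); first by rewrite (reduced_pm1 red_w w_pm1).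
rewrite negb_and !negbK => /orP [] /infixP [l [r ew]]; subst w.
  have : (5 %| count id (l ++ r))%N.
    apply: IH; first by move: size_w; rewrite !size_cat /=; lia.
    move: w_pm1; rewrite !word_mx_cat word_mx_SS mulNmx mul1mx mulmxN.
    exact: pm1N.
  by rewrite !count_cat.
have : (5 %| count id (l ++ r))%N.
  apply: IH; first by move: size_w; rewrite !size_cat size_nseq /=; lia.
  by move: w_pm1; rewrite !word_mx_cat word_mx_U5 mul1mx.
by rewrite !count_cat count_nseq mul1n addnCA => l_r; rewrite dvdn_addr.
Qed.

Definition countU_kernel (m : 'M[R]_2) := exists2 w, m = word_mx w & (5 %| count id w)%N.

Lemma countU_kernel_dvd w : countU_kernel (word_mx w) -> (5 %| count id w)%N.
Proof.
case=> w' ew w'_5; have : pm1 (word_mx (w ++ inv_word w')).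
  by left; rewrite word_mx_cat ew word_mx_inv_word.
by move/pm1_count_U; rewrite count_cat count_inv_word dvdn_addl // dvdn_mull.
Qed.

Lemma gen_countU_kernel (X : 'M[R]_2 -> Prop) m :
  (forall x, X x -> countU_kernel x) -> gen X m -> countU_kernel m.
Proof.
move=> XK; elim=> [|x /XK //|x y _ [w1 -> w1_5] _ [w2 -> w2_5]|x _ [w -> w_5]].
- by exists [::].
- by exists (w1 ++ w2); rewrite ?word_mx_cat // count_cat dvdn_add.
- by exists (inv_word w); rewrite ?invmx_word_mx // count_inv_word dvdn_mull.
Qed.

Lemma H5_fifth_countU_kernel m : H5_fifth m -> countU_kernel m.
Proof.
apply: gen_countU_kernel => _ [x [/H5_exists_word [w ->] ->]].
exists (w ++ w ++ w ++ w ++ w); first by rewrite !word_mx_cat !mulmxA.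
rewrite !count_cat.
have -> : (count id w + (count id w + (count id w + (count id w + count id w))) =
           5 * count id w)%N by lia.
exact: dvdn_mulr.
Qed.

Lemma H5_comm_countU_kernel m : H5_comm m -> countU_kernel m.
Proof.
apply: gen_countU_kernel => _ [x [y [/H5_exists_word [w1 ->]
  [/H5_exists_word [w2 ->] ->]]]].
exists (inv_word w1 ++ inv_word w2 ++ w1 ++ w2).
  by rewrite !word_mx_cat !mulmxA !invmx_word_mx.
rewrite !count_cat !count_inv_word.
have -> : (4 * count id w1 + (4 * count id w2 + (count id w1 + count id w2)) =
           5 * (count id w1 + count id w2))%N by lia.
exact: dvdn_mulr.
Qed.

(** * Words congruent to 1 modulo an integer *)

Definition dvdZlam (n : int) (x : R) := exists2 y, Zlam y & x = n%:~R * y.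

Lemma dvdZlam0 n : dvdZlam n 0.
Proof. by exists 0; [Zlam_closure | rewrite mulr0]. Qed.

Lemma dvdZlamD n x y : dvdZlam n x -> dvdZlam n y -> dvdZlam n (x + y).
Proof.
by move=> [x' Zx ->] [y' Zy ->]; exists (x' + y'); [Zlam_closure | rewrite mulrDr].
Qed.

Lemma dvdZlamMr n x y : dvdZlam n x -> Zlam y -> dvdZlam n (x * y).
Proof. by move=> [x' Zx ->] Zy; exists (x' * y); [Zlam_closure | rewrite mulrA]. Qed.

Lemma dvdZlam_factor m n x : dvdZlam (m * n) x -> dvdZlam m x.
Proof.
by move=> [y Zy ->]; exists (n%:~R * y); [Zlam_closure | rewrite intrM mulrA].
Qed.

Lemma dvdZlam_sub_eq n x y : dvdZlam n (x - y) -> exists2 z, Zlam z & x = y + n%:~R * z.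
Proof. by move=> [z Zz e]; exists z => //; rewrite -e addrC subrK. Qed.

Lemma Zlam_norm (a b : int) :
  (a%:~R + b%:~R * lam) * ((a + b)%:~R - b%:~R * lam) = (a * a + a * b - b * b)%:~R.
Proof. by rewrite !intrD !intrN !intrM; have e := lam_sqr; ring: e. Qed.

Lemma Zlam_coord_eq0 (a b : int) : a%:~R + b%:~R * lam = 0 -> a = 0 /\ b = 0.
Proof.
move=> ab0; apply: int_norm_eq0; apply/eqP; rewrite -(intr_eq0 R).
by rewrite -Zlam_norm ab0 mul0r.
Qed.

Lemma dvdZlam_coord (n a b : int) :
  dvdZlam n (a%:~R + b%:~R * lam) -> (n %| a)%Z /\ (n %| b)%Z.
Proof.
move=> [_ [c [d ->]] e].
have [a_nc b_nd] : a - n * c = 0 /\ b - n * d = 0.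
  apply: Zlam_coord_eq0; rewrite !intrD !intrN !intrM.
  have -> : a%:~R - n%:~R * c%:~R + (b%:~R - n%:~R * d%:~R) * lam =
            a%:~R + b%:~R * lam - n%:~R * (c%:~R + d%:~R * lam) :> R by ring.
  by rewrite e subrr.
by split; apply/dvdzP; [exists c | exists d]; lia.
Qed.

Definition Tpow_word (k : int) : seq bool :=
  match k with
  | Posz n => flatten (nseq n T_word)
  | Negz n => flatten (nseq n.+1 (inv_word T_word))
  end.

Lemma word_mx_flatten_nseq n w s : word_mx w = mx2 1 s 0 1 ->
  word_mx (flatten (nseq n w)) = mx2 1 (n%:R * s) 0 1.
Proof.
move=> ew; elim: n => [|n IH]; first by rewrite /= scalar_mx2 mul0r.
by rewrite /= word_mx_cat ew IH mulmx2 mulrS; congr mx2; ring.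
Qed.

Lemma word_mx_Tpow k : word_mx (Tpow_word k) = mx2 1 (k%:~R * lam) 0 1.
Proof.
case: k => n; rewrite /Tpow_word.
  by rewrite (word_mx_flatten_nseq _ word_mx_T) pmulrn.
have Tinv : word_mx (inv_word T_word) = mx2 1 (- lam) 0 1.
  rewrite (word_mx_compute (m := (((1,0),(0,-1)),((0,0),(1,0))))); last by vm_compute.
  by rewrite /zmx_val /zlam_val /=; congr mx2; ring.
by rewrite (word_mx_flatten_nseq _ Tinv) NegzE intrN pmulrn mulrN mulNr.
Qed.

Lemma count_Tpow k : exists t : int, (count id (Tpow_word k))%:Z = k + 5 * t.
Proof.
have count_flatten n w : count id (flatten (nseq n w)) = (n * count id w)%N.
  by elim: n => [|n IH] //=; rewrite count_cat IH mulSn.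
case: k => n /=; first by exists 0; rewrite count_flatten muln1; lia.
by exists n.+1%:Z; rewrite count_flatten NegzE /=; lia.
Qed.

Definition Lpow_word (k : int) := false :: Tpow_word k ++ [:: false; false; false].

Lemma word_mx_Lpow k : word_mx (Lpow_word k) = mx2 1 0 (- (k%:~R * lam)) 1.
Proof.
have S3 : word_mx [:: false; false; false] = mx2 0 (-1) 1 0.
  rewrite (word_mx_compute (m := (((0,0),(-1,0)),((1,0),(0,0))))); last by vm_compute.
  by rewrite /zmx_val /zlam_val /=; congr mx2; ring.
by rewrite word_mx_cons word_mx_cat word_mx_Tpow S3 /= /Smx !mulmx2; congr mx2; ring.
Qed.

Definition det2 (A : 'M[R]_2) := A i0 i0 * A i1 i1 - A i0 i1 * A i1 i0.

Lemma det2M A B : det2 (A *m B) = det2 A * det2 B.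
Proof. by rewrite /det2 !mulmx2E; ring. Qed.

Lemma det2_word_mx w : det2 (word_mx w) = 1.
Proof.
elim: w => [|b w IH]; first by rewrite /det2 word_mx_nil scalar_mx2 !mx2E; ring.
rewrite word_mx_cons det2M IH mulr1.
by case: b; rewrite /letter_mx /Umx ?mulmx2 /Smx /Tmx /det2 !mx2E; ring.
Qed.

Lemma word_mx_inv_wordE w : word_mx (inv_word w) =
  mx2 (word_mx w i1 i1) (- word_mx w i0 i1) (- word_mx w i1 i0) (word_mx w i0 i0).
Proof.
have := det2_word_mx w; set A := word_mx w; rewrite /det2 => detA.
have adjA : mx2 (A i1 i1) (- A i0 i1) (- A i1 i0) (A i0 i0) *m A = 1%:M.
  rewrite [X in _ *m X]mx2_eta mulmx2 scalar_mx2.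
  by congr mx2; first [ring | rewrite -detA; ring].
by rewrite -[LHS]mul1mx -adjA -mulmxA word_mx_inv_word mulmx1.
Qed.

Lemma word_mx_conj_Tpow w k : word_mx (w ++ Tpow_word k ++ inv_word w) =
  mx2 (1 - k%:~R * lam * (word_mx w i0 i0 * word_mx w i1 i0))
      (k%:~R * lam * word_mx w i0 i0 ^+ 2)
      (- (k%:~R * lam * word_mx w i1 i0 ^+ 2))
      (1 + k%:~R * lam * (word_mx w i0 i0 * word_mx w i1 i0)).
Proof.
rewrite !word_mx_cat word_mx_Tpow word_mx_inv_wordE mulmxA.
have := det2_word_mx w; rewrite /det2; move: (word_mx w) => A detA.
set K := k%:~R * lam.
have conj_id a b c d : mx2 a b c d *m mx2 1 K 0 1 *m mx2 d (- b) (- c) a =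
    mx2 (a * d - b * c - K * (a * c)) (K * a ^+ 2)
        (- (K * c ^+ 2)) (a * d - b * c + K * (a * c)).
  by rewrite !mulmx2; congr mx2; ring.
by rewrite {1}[A]mx2_eta conj_id detA.
Qed.

Definition unip_mod (n : int) (A : 'M[R]_2) (b : R) :=
  [/\ dvdZlam n (A i0 i0 - 1), dvdZlam n (A i0 i1 - b),
      dvdZlam n (A i1 i0) & dvdZlam n (A i1 i1 - 1)].

Lemma unip_modM n A B b b' : Zlam b -> Zlam b' ->
  unip_mod n A b -> unip_mod n B b' -> unip_mod n (A *m B) (b + b').
Proof.
move=> Zb Zb'.
case=> /dvdZlam_sub_eq [x00 Zx00 A00] /dvdZlam_sub_eq [x01 Zx01 A01] [x10 Zx10 A10]
       /dvdZlam_sub_eq [x11 Zx11 A11].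
case=> /dvdZlam_sub_eq [y00 Zy00 B00] /dvdZlam_sub_eq [y01 Zy01 B01] [y10 Zy10 B10]
       /dvdZlam_sub_eq [y11 Zy11 B11].
rewrite /unip_mod !mulmx2E A00 A01 A10 A11 B00 B01 B10 B11; set m := n%:~R.
have Zm : Zlam m by apply: Zlam_int.
split.
- by exists (x00 + y00 + m * x00 * y00 + b * y10 + m * x01 * y10); [Zlam_closure | ring].
- by exists (y01 + x00 * b' + m * x00 * y01 + x01 + b * y11 + m * x01 * y11);
    [Zlam_closure | ring].
- by exists (x10 + m * x10 * y00 + y10 + m * x11 * y10); [Zlam_closure | ring].
- by exists (x10 * b' + m * x10 * y01 + x11 + y11 + m * x11 * y11); [Zlam_closure | ring].
Qed.

Lemma unip_mod_Tpow n k : unip_mod n (word_mx (Tpow_word k)) (k%:~R * lam).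
Proof. by rewrite /unip_mod word_mx_Tpow !mx2E !subrr; split; apply: dvdZlam0. Qed.

Lemma unip_mod_conj (q M k : int) w : dvdZlam q (word_mx w i1 i0) ->
  unip_mod (q * M) (word_mx (w ++ Tpow_word (M * k) ++ inv_word w))
           ((M * k)%:~R * lam * word_mx w i0 i0 ^+ 2).
Proof.
move=> [z Zz c_qz]; rewrite /unip_mod word_mx_conj_Tpow !mx2E c_qz.
have Za := Zlam_word_mx w i0 i0; set a := word_mx w i0 i0 in Za *.
split.
- by exists (- (k%:~R * lam * (a * z))); [Zlam_closure | rewrite !intrM; ring].
- by rewrite subrr; apply: dvdZlam0.
- by exists (- (k%:~R * lam * (q%:~R * z * z))); [Zlam_closure | rewrite !intrM; ring].
- by exists (k%:~R * lam * (a * z)); [Zlam_closure | rewrite !intrM; ring].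
Qed.

Definition mod5_word (i : nat) (w : seq bool) :=
  [/\ dvdZlam (5 ^+ i.+1) (word_mx w i1 i0), dvdZlam 5 (word_mx w i0 i0 - lam)
    & dvdZlam 5 (word_mx w i1 i1 - (lam - 1))].

(* S^3 T S T^2 S T^2 S T^2 S T^4 S; here [true] stands for T, not U. *)
Definition base_word : seq bool :=
  flatten [seq if t then T_word else [:: false] |
           t <- [:: false; false; false; true; false; true; true; false; true; true;
                    false; true; true; false; true; true; true; true; false]].

Lemma mod5_word_base : mod5_word 0 base_word.
Proof.
rewrite /mod5_word (word_mx_compute (m := (((45,76),(-8,-12)),((-60,-95),(9,16))))).
  rewrite /zmx_val !mx2E /zlam_val /=; split.
  - by exists (zlam_val (-12, -19)); [exact: Zlam_val | rewrite /zlam_val /=; ring].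
  - by exists (zlam_val (9, 15)); [exact: Zlam_val | rewrite /zlam_val /=; ring].
  - by exists (zlam_val (2, 3)); [exact: Zlam_val | rewrite /zlam_val /=; ring].
by vm_compute.
Qed.

(* Multiplying by lower unitriangular matrices on both sides lifts the
   divisibility of the lower left entry by one power of 5 (Hensel's lemma):
   modulo 5 the correction (k1, k2) |-> k1 lam a + k2 lam d is
   (k1, k2) |-> k1 (lam + 1) + k2, which is onto. *)
Lemma mod5_word_lift i w : mod5_word i w -> exists w', mod5_word i.+1 w'.
Proof.
case=> [[_ [g1 [g2 ->]] c_eq] /dvdZlam_sub_eq [ta Zta a_eq]].
move=> /dvdZlam_sub_eq [td Ztd d_eq].
exists (Lpow_word (5 ^+ i.+1 * g2) ++ w ++ Lpow_word (5 ^+ i.+1 * (g1 - g2))).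
have Zb := Zlam_word_mx w i0 i1.
rewrite /mod5_word !word_mx_cat !word_mx_Lpow [word_mx w]mx2_eta !mulmx2 !mx2E.
rewrite c_eq a_eq d_eq; set b := word_mx w i0 i1 in Zb *.
have p5 : (5 ^+ i.+1 : int)%:~R = 5 * (5 ^+ i : int)%:~R :> R by rewrite exprS intrM.
have p25 : (5 ^+ i.+2 : int)%:~R = 5 * (5 * (5 ^+ i : int)%:~R) :> R.
  by rewrite exprS intrM p5.
have e := lam_sqr.
split.
- exists (- (g2%:~R * lam * ta + (g1 - g2)%:~R * lam * td) +
          (5 ^+ i : int)%:~R * g2%:~R * (g1 - g2)%:~R * (lam + 1) * b).
    by Zlam_closure.
  by rewrite p25 !intrM p5 !intrD !intrN; ring: e.
- exists (ta - (5 ^+ i : int)%:~R * (g1 - g2)%:~R * lam * b); first by Zlam_closure.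
  by rewrite !intrM p5 !intrD !intrN; ring.
- exists (td - (5 ^+ i : int)%:~R * g2%:~R * lam * b); first by Zlam_closure.
  by rewrite !intrM p5; ring.
Qed.

Lemma exists_mod5_word i : exists w, mod5_word i w.
Proof.
elim: i => [|i [w /mod5_word_lift //]].
by exists base_word; apply: mod5_word_base.
Qed.

Lemma dvdZlam_sqr_sub n x y : Zlam x -> Zlam y -> dvdZlam n (x - y) ->
  dvdZlam n (x ^+ 2 - y ^+ 2).
Proof.
move=> Zx Zy n_xy; have -> : x ^+ 2 - y ^+ 2 = (x - y) * (x + y) by ring.
by apply: dvdZlamMr => //; Zlam_closure.
Qed.

Lemma dvdZlam_sqr_coord n x y (a b a' b' : int) :
  Zlam x -> Zlam y -> dvdZlam n (x - y) ->
  x ^+ 2 = a%:~R + b%:~R * lam -> y ^+ 2 = a'%:~R + b'%:~R * lam ->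
  (n %| a - a')%Z /\ (n %| b - b')%Z.
Proof.
move=> Zx Zy /(dvdZlam_sqr_sub Zx Zy) n_sqr x_sqr y_sqr; apply: dvdZlam_coord.
suff -> : (a - a')%:~R + (b - b')%:~R * lam = x ^+ 2 - y ^+ 2 :> R by [].
by rewrite x_sqr y_sqr !intrD !intrN; ring.
Qed.

Lemma exists_conj_words j : exists w1 w2,
  [/\ dvdZlam (5 ^+ j) (word_mx w1 i1 i0), dvdZlam (5 ^+ j) (word_mx w2 i1 i0),
      dvdZlam 5 (word_mx w1 i0 i0 - lam) & dvdZlam 5 (word_mx w2 i0 i0 - (lam + 1))].
Proof.
have [w [c_5 a_lam _]] := exists_mod5_word j; exists w, (w ++ w).
have c_q : dvdZlam (5 ^+ j) (word_mx w i1 i0).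
  by move: c_5; rewrite exprSr; apply: dvdZlam_factor.
have c_5' : dvdZlam 5 (word_mx w i1 i0) by move: c_5; rewrite exprS; apply: dvdZlam_factor.
have Zw := Zlam_word_mx w; rewrite word_mx_cat !mulmx2E; split => //.
  by apply: dvdZlamD; [|rewrite mulrC]; apply: dvdZlamMr c_q (Zw _ _).
set a := word_mx w i0 i0.
have -> : a * a + word_mx w i0 i1 * word_mx w i1 i0 - (lam + 1) =
          (a ^+ 2 - lam ^+ 2) + word_mx w i1 i0 * word_mx w i0 i1.
  by rewrite lam_sqr; ring.
apply: dvdZlamD; last exact: dvdZlamMr c_5' (Zw _ _).
by apply: dvdZlam_sqr_sub a_lam; Zlam_closure.
Qed.

Lemma count_conj w u :
  count id (w ++ u ++ inv_word w) = (5 * count id w + count id u)%N.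
Proof. by rewrite !count_cat count_inv_word; lia. Qed.

(* Conjugates of T^(M k1) and T^(M k2) by words whose upper left entries are
   congruent to lam and lam + 1 modulo 5, times T^(M k3), where k1, k2, k3 are
   chosen so that the upper right entries cancel exactly; the product is then
   congruent to 1 modulo N, while its number of U's is congruent to M modulo 5. *)
Lemma exists_word_cong1 (N : nat) : (0 < N)%N ->
  exists2 w, ~~ (5 %| count id w)%N & unip_mod N (word_mx w) 0.
Proof.
move=> N_gt0; have [M coprime_5M N_eq] := pfactor_coprime (isT : prime 5) N_gt0.
set j := logn 5 N in N_eq; have [w1 [w2 [c1_q c2_q a1_lam a2_lam]]] := exists_conj_words j.
set a1 := word_mx w1 i0 i0 in a1_lam *; set a2 := word_mx w2 i0 i0 in a2_lam *.
have [Za1 Za2] : Zlam a1 /\ Zlam a2 by split; apply: Zlam_word_mx.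
have [x1 [y1 a1_sqr]] : Zlam (a1 ^+ 2) by Zlam_closure.
have [x2 [y2 a2_sqr]] : Zlam (a2 ^+ 2) by Zlam_closure.
have [/dvdzP [e1 x1_eq] /dvdzP [f1 y1_eq]] : (5 %| x1 - 1)%Z /\ (5 %| y1 - 1)%Z.
  by apply: dvdZlam_sqr_coord Za1 Zlam_lam a1_lam a1_sqr _; rewrite lam_sqr; ring.
have [/dvdzP [e2 x2_eq] /dvdzP [f2 y2_eq]] : (5 %| x2 - 2)%Z /\ (5 %| y2 - 3)%Z.
  apply: dvdZlam_sqr_coord Za2 _ a2_lam a2_sqr _; first by Zlam_closure.
  by rewrite sqrrD1 lam_sqr; ring.
set k1 := y2; set k2 := - y1; set k3 := x2 * y1 - x1 * y2.
exists ((w1 ++ Tpow_word (M%:Z * k1) ++ inv_word w1) ++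
        (w2 ++ Tpow_word (M%:Z * k2) ++ inv_word w2) ++ Tpow_word (M%:Z * k3)).
  have [t1 ht1] := count_Tpow (M%:Z * k1); have [t2 ht2] := count_Tpow (M%:Z * k2).
  have [t3 ht3] := count_Tpow (M%:Z * k3).
  set s := f1 + e2 + 5 * e2 * f1 - 3 * e1 - 5 * e1 * f2.
  have ksum : k1 + k2 + k3 = 1 + 5 * s.
    rewrite /k1 /k2 /k3 /s (_ : x1 = 1 + e1 * 5); last by lia.
    rewrite (_ : y1 = 1 + f1 * 5); last by lia.
    rewrite (_ : x2 = 2 + e2 * 5); last by lia.
    by rewrite (_ : y2 = 3 + f2 * 5); [ring | lia].
  have Msum : M%:Z * k1 + M%:Z * k2 + M%:Z * k3 = M%:Z + 5 * (M%:Z * s).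
    by rewrite -!mulrDr ksum; ring.
  (* Abstracting the products makes the remaining arithmetic linear. *)
  move: ht1 ht2 ht3 Msum.
  move: (M%:Z * s) (M%:Z * k1) (M%:Z * k2) (M%:Z * k3) => Ms P1 P2 P3.
  rewrite count_cat count_conj count_cat count_conj.
  by move: coprime_5M; rewrite prime_coprime //; lia.
have -> : N%:Z = 5 ^+ j * M%:Z by rewrite N_eq PoszM -[Posz (5 ^ j)]natz natrX mulrC.
rewrite -(_ : (M%:Z * k1)%:~R * lam * a1 ^+ 2 +
  ((M%:Z * k2)%:~R * lam * a2 ^+ 2 + (M%:Z * k3)%:~R * lam) = 0); last first.
  by rewrite a1_sqr a2_sqr /k1 /k2 /k3 !intrM !intrD !intrN !intrM; ring.
rewrite word_mx_cat; apply: unip_modM; [Zlam_closure.. | exact: unip_mod_conj |].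
rewrite word_mx_cat; apply: unip_modM; [Zlam_closure.. | exact: unip_mod_conj |].
exact: unip_mod_Tpow.
Qed.

(* The norm (a + b lam)(a + b - b lam) of a nonzero element is a nonzero integer. *)
Lemma nonzero_ideal_nat A : nonzero_ideal A -> exists2 N : nat, (0 < N)%N & A N%:R.
Proof.
case=> [[A_Z A0 A_sub A_mul] [x [Ax x_neq0]]].
have [a [b x_eq]] := A_Z x Ax.
have An : A (a * a + a * b - b * b)%:~R.
  rewrite -Zlam_norm mulrC -x_eq; apply: A_mul Ax.
  by exists (a + b), (- b); rewrite intrN mulNr.
have n_neq0 : a * a + a * b - b * b != 0.
  by apply: contra x_neq0 => /eqP /int_norm_eq0 [a0 b0]; rewrite x_eq a0 b0 mul0r addr0.
move: An n_neq0; set n := _ - _ => An n_neq0.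
exists `|n|%N; first by rewrite absz_gt0.
rewrite pmulrn; have [n_ge0|n_lt0] := leP 0 n; first by rewrite gez0_abs.
by rewrite ltz0_abs // intrN -sub0r; apply: A_sub.
Qed.

Lemma ideal_dvdZlam A (N : nat) x : is_ideal A -> A N%:R -> dvdZlam N x -> A x.
Proof. by case=> _ _ _ A_mul AN [y Zy ->]; rewrite -pmulrn mulrC; apply: A_mul. Qed.

Lemma HA_not_countU_kernel A : nonzero_ideal A -> exists2 m, HA A m & ~ countU_kernel m.
Proof.
move=> A_nz; have [N N_gt0 AN] := nonzero_ideal_nat A_nz.
have [w not5 [w00 w01 w10 w11]] := exists_word_cong1 N_gt0.
exists (word_mx w); last by move/countU_kernel_dvd; apply/negP.
have divA := ideal_dvdZlam A_nz.1 AN.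
by split; [exact: H5_word_mx | exact: divA | exact: divA | rewrite -[_ i0 i1]subr0 | ];
  apply: divA.
Qed.

Lemma not_congruence (G : 'M[R]_2 -> Prop) :
  (forall m, G m -> countU_kernel m) -> ~ congruence G.
Proof.
move=> GK [A [A_nz HA_G]]; have [m /HA_G Gm] := HA_not_countU_kernel A_nz.
by apply; apply: GK.
Qed.

End Hecke5.

Theorem proposition7p2 (R : realType) :
  ~ congruence (@H5_fifth R) /\ ~ congruence (@H5_comm R).
Proof.
split; apply: not_congruence.
  exact: H5_fifth_countU_kernel.
exact: H5_comm_countU_kernel.
Qed.
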